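(* Let $c\colon G\to G_0$ be a collapse of finite connected graphs. Then $F_G\circ c^*=F_{G_0}$ on $\mathcal M(G_0)$, i.e. $F_G(c^*(\ell))=F_{G_0}(\ell)$ for all $\ell\in\mathcal M(G_0)$.
   Context: A graph has oriented edge set $E$ with maps $o,\tau$ to the vertex set, a fixed-point-free involution $e\mapsto\bar e$ with $o(\bar e)=\tau(e)$, and orientation $E_+$. $\mathcal M(G)=\mathbb R_{>0}^{|E_+|}$ is the set of length functions, extended to $E$ by $\ell(\bar e)=\ell(e)$. For any $f\in\mathbb R^{|E_+|}$ (extended symmetrically), $A_{G,f}(e,e')=A_G(e,e')\exp(-f(e))$ where $A_G(e,e')=1$ if $\tau(e)=o(e')$ and $e'\ne\bar e$ and $0$ otherwise, and $F_G(f)=\det(I-A_{G,f})$, which is defined on all of $\mathbb R^{|E_+|}$. A collapse $c\colon G\to G_0$ is a surjection such that each edge of $G$ maps to a vertex or to an edge of $G_0$ and $c^{-1}(x)$ is a contractible subgraph for every point $x$ of $G_0$. The map $c^*\colon\mathcal M(G_0)\to\mathbb R_{\ge0}^{|E_+|}$ is $c^*(\ell)(e)=\ell(c(e))$ if $c(e)$ is an edge and $c^*(\ell)(e)=0$ otherwise. *)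

From HB Require Import structures.
From mathcomp Require Import all_boot all_order all_algebra.
From mathcomp Require Import reals sequences exp.

Set Implicit Arguments.
Unset Strict Implicit.
Unset Printing Implicit Defensive.

Import Order.TTheory GRing.Theory Num.Theory.
Local Open Scope ring_scope.

(* A finite graph in Serre's sense: vertex set, oriented edge set, origin and
   terminus maps, and a fixed-point-free involution e |-> bar e with
   o(bar e) = tau(e) (hence also tau(bar e) = o(e)). Loops and multiple
   edges are allowed. *)
Record graph := Graph {
  gV : finType;
  gE : finType;
  org : gE -> gV;
  ter : gE -> gV;
  rev : gE -> gE;
  revK : forall e, rev (rev e) = e;
  rev_neq : forall e, rev e != e;
  org_rev : forall e, org (rev e) = ter e
}.

Definition adj (G : graph) : rel (gV G) :=
  fun x y => [exists e : gE G, (org e == x) && (ter e == y)].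

Definition connected_graph (G : graph) : Prop :=
  (0 < #|gV G|)%N /\ forall x y : gV G, connect (@adj G) x y.

(* A function on oriented edges extended symmetrically: f (bar e) = f e.
   Functions on E_+ correspond bijectively to such symmetric functions. *)
Definition symmetric_fun (G : graph) (R : Type) (f : gE G -> R) : Prop :=
  forall e, f (rev e) = f e.

Definition length_fun (R : realType) (G : graph) (l : gE G -> R) : Prop :=
  symmetric_fun l /\ forall e, 0 < l e.

Definition AG (G : graph) (e e' : gE G) : bool :=
  (ter e == org e') && (e' != rev e).

Definition AGf (R : realType) (G : graph) (f : gE G -> R) : 'M[R]_#|gE G| :=
  \matrix_(i, j) ((AG (enum_val i) (enum_val j))%:R * expR (- f (enum_val i))).

Definition FG (R : realType) (G : graph) (f : gE G -> R) : R :=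
  \det (1%:M - AGf f).

(* Combinatorial collapse c : G -> G0, given by a vertex map cV and an edge
   map cE, where cE e = None means that the edge e is mapped to a vertex and
   cE e = Some e0 means that e is mapped onto the edge e0. *)
Definition is_collapse (G G0 : graph) (cV : gV G -> gV G0)
    (cE : gE G -> option (gE G0)) : Prop :=
  (forall e e0, cE e = Some e0 ->
     [/\ cV (org e) = org e0, cV (ter e) = ter e0 & cE (rev e) = Some (rev e0)])
  /\ (forall e, cE e = None -> cV (org e) = cV (ter e) /\ cE (rev e) = None)
  (* the preimage of an interior point of an edge e0 is a single point,
     i.e. exactly one oriented edge is mapped onto e0 *)
  /\ (forall e0 : gE G0, #|[set e | cE e == Some e0]| = 1%N)
  (* the preimage of a vertex v0 is a contractible subgraph, i.e. a tree:
     nonempty, connected, with Euler characteristic 1 *)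
  /\ (forall v0 : gV G0,
       let Vs := [set v | cV v == v0] in
       let Es := [set e | (cE e == None) && (cV (org e) == v0)] in
       [/\ (0 < #|Vs|)%N,
           (forall x y, x \in Vs -> y \in Vs ->
              connect (fun a b => [exists e, [&& cE e == None, org e == a
                                                  & ter e == b]]) x y)
         & #|Es| = (2 * (#|Vs| - 1))%N]).

Definition pullback (R : realType) (G G0 : graph)
    (cE : gE G -> option (gE G0)) (l : gE G0 -> R) : gE G -> R :=
  fun e => if cE e is Some e0 then l e0 else 0.

From Pilot Require Import Defs.
From mathcomp Require Import all_boot all_order all_algebra.
From mathcomp Require Import reals sequences exp.
From mathcomp Require Import fingroup perm zify.
(* The graph involution and its involutivity, not the sequence reversal. *)
Local Notation rev := Defs.rev.
Local Notation revK := Defs.revK.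

Set Implicit Arguments.
Unset Strict Implicit.
Unset Printing Implicit Defensive.

(* Let c : G -> G0 be a collapse, l a function on the edges of G0 and
   f = c^* l. An edge of G is collapsed when c maps it to a vertex; every edge
   e0 of G0 has a unique preimage edge, its lift. Split A_{G,f} = B + P Q:
   B keeps the rows of collapsed edges (where f = 0), P e e0 = [e = lift e0]
   and Q e0 e' = A_G(lift e0, e') exp(-l e0). Let Y e e0 = 1 when a
   non-backtracking walk whose edges, except the last, are collapsed leads
   from e to lift e0. Then
   (1) det(1 - B) = 1, as B strictly decreases a potential on edges;
   (2) (1 - B) Y = P, by splitting off the first step of such walks;
   (3) Q Y = A_{G0,l}, since these walks from the successors of lift e0 to
       lift e0' correspond to the transitions e0 -> e0' of G0;
   so 1 - A_{G,f} = (1 - B)(1 - Y Q), and Sylvester's identity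
   det(1 - Y Q) = det(1 - Q Y) gives the theorem.
   Steps (1)-(3) rest on the fact that each fibre of c is a tree: rooting it,
   every collapsed edge points either towards or away from the root, and a
   walk starting with a collapsed edge e reaches exactly the non-collapsed
   edges leaving the part of the tree lying beyond e. *)

Import GRing.Theory.

Section DeterminantFacts.
Local Open Scope ring_scope.

Lemma det_1subMC (R : comPzRingType) (m k : nat) (Y : 'M[R]_(m, k)) (Q : 'M[R]_(k, m)) :
  \det (1%:M - Y *m Q) = \det (1%:M - Q *m Y).
Proof.
have lower : block_mx 1%:M Y Q 1%:M =
    block_mx 1%:M 0 Q 1%:M *m block_mx 1%:M Y 0 (1%:M - Q *m Y).
  rewrite mulmx_block; congr block_mx; rewrite ?mul1mx ?mul0mx ?mulmx0 ?mulmx1 ?addr0 ?add0r //.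
  by rewrite addrC subrK.
have upper : block_mx 1%:M Y Q 1%:M =
    block_mx 1%:M Y 0 1%:M *m block_mx (1%:M - Y *m Q) 0 Q 1%:M.
  rewrite mulmx_block; congr block_mx; rewrite ?mul1mx ?mul0mx ?mulmx0 ?mulmx1 ?addr0 ?add0r //.
  by rewrite subrK.
have := congr1 determinant lower; rewrite upper !det_mulmx !det_lblock !det_ublock !det1.
by rewrite !mul1r !mulr1.
Qed.

(* If the support of B strictly decreases a potential phi on indices, then
   1 - B is triangular up to reordering with unit diagonal: det(1 - B) = 1.
   Only the identity permutation contributes to the Leibniz expansion, since
   any other one would need an entry B i (s i) <> 0 with phi (s i) >= phi i. *)
Lemma det_1sub_graded (R : comPzRingType) n (B : 'M[R]_n) (phi : 'I_n -> nat) :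
  (forall i j, B i j != 0 -> (phi j < phi i)%N) -> \det (1%:M - B) = 1.
Proof.
move=> hB.
have Bii i : B i i = 0 by apply/eqP/negP => /negP /hB; rewrite ltnn.
rewrite /determinant (bigD1 1%g) //= [X in _ + X]big1 => [|s s_neq1].
  rewrite odd_perm1 expr0 mul1r addr0 big1 // => i _.
  by rewrite perm1 !mxE eqxx Bii subr0.
case: (pickP (fun i => (1%:M - B) i (s i) == 0)) => [i /eqP zero_i | nonzero].
  by rewrite (bigD1 i) //= zero_i mul0r mulr0.
have [i0 moved_i0] : exists i0, s i0 != i0.
  case: (pickP (fun i => s i != i)) => [i0 h|fixed]; first by exists i0.
  move: s_neq1; suff -> : s = 1%g by rewrite eqxx.
  by apply/permP => i; rewrite perm1; apply/eqP/negbFE/fixed.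
(* The moved index of minimal potential is sent to a moved index of larger potential. *)
case: (@arg_minnP _ i0 (fun i => s i != i) phi moved_i0) => i moved_i min_i.
have moved_si : s (s i) != s i by apply: contra moved_i => /eqP /perm_inj ->.
have := min_i _ moved_si; have := nonzero i.
rewrite !mxE [i == s i]eq_sym (negbTE moved_i) sub0r oppr_eq0 => /negbT /hB.
lia.
Qed.

Lemma sum_enum_uniq (R : pzSemiRingType) (T : finType) (P : pred T) :
  (forall x y, P x -> P y -> x = y) ->
  \sum_(i < #|T|) (P (enum_val i))%:R = ([exists x, P x])%:R :> R.
Proof.
move=> P_uniq; case: (boolP [exists x, P x]) => [/existsP [x Px] | /existsPn noP].
- rewrite (bigD1 (enum_rank x)) //= enum_rankK Px big1 ?addr0 // => i i_neq.
  case Pi: (P (enum_val i)) => //; move: i_neq.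
  by rewrite -(P_uniq _ _ Pi Px) enum_valK eqxx.
- by rewrite big1 // => i _; rewrite (negbTE (noP _)).
Qed.

End DeterminantFacts.

Lemma ter_rev (H : graph) (e : gE H) : ter (rev e) = org e.
Proof. by rewrite -{2}(revK e) org_rev. Qed.

Lemma rev_inj (H : graph) : injective (@rev H).
Proof. exact: (can_inj (@revK H)). Qed.

Section CollapseFibres.
Variables (G G0 : graph) (cV : gV G -> gV G0) (cE : gE G -> option (gE G0)).
Hypothesis Hc : is_collapse cV cE.

Definition collapsed (e : gE G) : bool := cE e == None.

Lemma cE_some e e0 : cE e = Some e0 ->
  [/\ cV (org e) = org e0, cV (ter e) = ter e0 & cE (rev e) = Some (rev e0)].
Proof. by case: Hc => cell _ /cell. Qed.

Lemma collapsed_cV e : collapsed e -> cV (org e) = cV (ter e).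
Proof. by case: Hc => _ [cell _] /eqP /cell []. Qed.

Lemma collapsed_rev e : collapsed (rev e) = collapsed e.
Proof.
have rev_coll f : collapsed f -> collapsed (rev f).
  by case: Hc => _ [cell _] /eqP /cell [_ /eqP].
by apply/idP/idP => [/rev_coll|/rev_coll //]; rewrite revK.
Qed.

Lemma preimage_card e0 : #|[set a | cE a == Some e0]| == 1%N.
Proof. by case: Hc => _ [_ [one _]]; rewrite one. Qed.

Lemma lift_ex e0 : exists a, cE a == Some e0.
Proof.
have /cards1P [a one_a] := preimage_card e0; exists a.
by move: (set11 a); rewrite -one_a inE.
Qed.

Definition lift e0 : gE G := xchoose (lift_ex e0).

Lemma liftP e0 : cE (lift e0) = Some e0.
Proof. exact/eqP/(xchooseP (lift_ex e0)). Qed.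

Lemma eq_lift a e0 : (cE a == Some e0) = (a == lift e0).
Proof.
have /cards1P [x one_x] := preimage_card e0.
have is_x b : (cE b == Some e0) = (b == x) by move: (in_set1 b x); rewrite -one_x inE.
by have /eqP := liftP e0; rewrite !is_x => /eqP ->.
Qed.

Lemma lift_uniq a e0 : cE a = Some e0 -> a = lift e0.
Proof. by move/eqP; rewrite eq_lift => /eqP. Qed.

Lemma lift_noncollapsed e0 : ~~ collapsed (lift e0).
Proof. by rewrite /collapsed liftP. Qed.

(* Adjacency along collapsed edges. Its connected components are exactly the
   fibres of cV, which are trees; we root each of them. *)
Definition crel : rel (gV G) :=
  fun a b => [exists e, [&& collapsed e, org e == a & ter e == b]].

Lemma crel_cV a b : crel a b -> cV a = cV b.
Proof. by case/existsP => e /and3P [/collapsed_cV cVe /eqP <- /eqP <-]. Qed.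

Lemma fibre_connect x y : cV x = cV y -> connect crel x y.
Proof.
case: Hc => _ [_ [_ tree]] xy; case: (tree (cV x)) => _ /(_ x y) conn _.
by apply: conn; rewrite inE ?xy.
Qed.

Definition root (x : gV G) : gV G := odflt x [pick y | cV y == cV x].

Lemma root_cV x : cV (root x) = cV x.
Proof. by rewrite /root; case: pickP => [y /eqP|]. Qed.

Lemma root_eq x y : cV x = cV y -> root x = root y.
Proof.
move=> xy; rewrite /root xy; case: pickP => [//|/(_ x)].
by rewrite xy eqxx.
Qed.

Definition root_path x n :=
  [exists t : n.-tuple (gV G), path crel x t && (last x t == root x)].

Lemma root_path_ex x : exists n, root_path x n.
Proof.
have /connectP [p p_path p_last] := fibre_connect (esym (root_cV x)).
by exists (size p); apply/existsP; exists (in_tuple p); rewrite p_path -p_last eqxx.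
Qed.

Definition depth x := ex_minn (root_path_ex x).

Lemma depthP x : root_path x (depth x).
Proof. by rewrite /depth; case: ex_minnP. Qed.

Lemma depth_min x n : root_path x n -> depth x <= n.
Proof. by rewrite /depth; case: ex_minnP => m _ min_m /min_m. Qed.

Lemma depth_root x : depth (root x) = 0.
Proof.
apply/eqP; rewrite -leqn0; apply: depth_min; apply/existsP; exists [tuple].
by rewrite /= (root_eq (root_cV x)) (root_eq (esym (root_cV x))) eqxx.
Qed.

Lemma depth_eq0 x : (depth x == 0) = (x == root x).
Proof.
apply/eqP/eqP => [depth0 | ->]; last exact: depth_root.
by have := depthP x; rewrite depth0 => /existsP [t /andP [_ /eqP]]; rewrite tuple0.
Qed.

Lemma root_path_cons a b n : crel a b -> root_path b n -> root_path a n.+1.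
Proof.
move=> ab /existsP [t /andP [t_path /eqP t_last]].
apply/existsP; exists [tuple of b :: t].
by rewrite /= ab t_path /= t_last (root_eq (crel_cV ab)) eqxx.
Qed.

Lemma root_path_uncons x n : root_path x n.+1 -> exists2 y, crel x y & root_path y n.
Proof.
move=> /existsP [[[|y s] size_s] //= /andP [/andP [xy s_path] /eqP s_last]].
have size_s' : size s == n by [].
exists y => //; apply/existsP; exists (Tuple size_s').
by rewrite /= s_path s_last (root_eq (crel_cV xy)) eqxx.
Qed.

Lemma depth_down x : 0 < depth x ->
  exists e, [&& collapsed e, org e == x & depth (ter e) == (depth x).-1].
Proof.
case def_d: (depth x) => [|d] // _; have := depthP x; rewrite def_d.
case/root_path_uncons => y xy /depth_min y_le.
have x_le := depth_min (root_path_cons xy (depthP y)); rewrite def_d in x_le.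
case/existsP: xy => e /and3P [coll_e org_e /eqP ter_e]; exists e.
by rewrite coll_e org_e ter_e /=; apply/eqP; lia.
Qed.

Definition parent_edge x : option (gE G) :=
  if depth x is 0 then None
  else [pick e | [&& collapsed e, org e == x & depth (ter e) == (depth x).-1]].

Definition parent x : gV G := if parent_edge x is Some e then ter e else x.

Lemma parent_edgeP x e : parent_edge x = Some e ->
  [/\ 0 < depth x, collapsed e, org e = x, ter e = parent x
    & depth (ter e) = (depth x).-1].
Proof.
move=> pe_x; rewrite /parent pe_x; move: pe_x; rewrite /parent_edge.
case: (depth x) => [|d] //; case: pickP => // e' /and3P [? /eqP ? /eqP ?] [<-].
by split.
Qed.

Lemma parent_edge_ex x : 0 < depth x -> exists e, parent_edge x = Some e.
Proof.
move=> pos; have [e down_e] := depth_down pos; rewrite /parent_edge.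
case: (depth x) pos down_e => [|d] // _ down_e.
by case: pickP => [e' _|/(_ e)]; [exists e' | rewrite down_e].
Qed.

Lemma depth_parent x : depth (parent x) = (depth x).-1.
Proof.
case pe_x: (parent_edge x) => [e|]; first by have [_ _ _ <- ->] := parent_edgeP pe_x.
rewrite /parent pe_x; case: (posnP (depth x)) => [-> //|pos].
by have [e pe_x'] := parent_edge_ex pos; rewrite pe_x' in pe_x.
Qed.

Lemma cV_parent x : cV (parent x) = cV x.
Proof.
rewrite /parent; case pe_x: (parent_edge x) => [e|] //.
by have [_ /collapsed_cV cVe <- _ _] := parent_edgeP pe_x.
Qed.

Definition descending e := parent_edge (org e) == Some e.
Definition ascending e := parent_edge (ter e) == Some (rev e).

Lemma descendingP e : descending e ->
  [/\ collapsed e, 0 < depth (org e), ter e = parent (org e)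
    & depth (ter e) = (depth (org e)).-1].
Proof. by move=> /eqP /parent_edgeP []. Qed.

Lemma ascendingP e : ascending e ->
  [/\ collapsed e, 0 < depth (ter e), org e = parent (ter e)
    & depth (org e) = (depth (ter e)).-1].
Proof.
move=> /eqP /parent_edgeP [pos coll _ ter_r dep].
by rewrite collapsed_rev in coll; rewrite ter_rev in ter_r dep.
Qed.

Lemma ascending_descending e : ascending e -> ~~ descending e.
Proof. by move=> /ascendingP [_ pos _ d1]; apply/negP => /descendingP [_ _ _ d2]; lia. Qed.

Lemma parent_edge_descending x e : parent_edge x = Some e -> descending e.
Proof. by move=> pe_x; have [_ _ org_e _ _] := parent_edgeP pe_x; rewrite /descending org_e pe_x. Qed.

Lemma parent_edge_ascending x e : parent_edge x = Some e -> ascending (rev e).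
Proof.
move=> pe_x; have [_ _ org_e _ _] := parent_edgeP pe_x.
by rewrite /ascending ter_rev org_e pe_x revK.
Qed.

Definition nonroot v0 := [set v | (cV v == v0) && (0 < depth v)].

Lemma card_fibre v0 : #|[set v | cV v == v0]| = #|nonroot v0|.+1.
Proof.
case: Hc => _ [_ [_ /(_ v0) [/card_gt0P [z] + _ _]]]; rewrite inE => /eqP z_v0.
have -> : nonroot v0 = [set v | cV v == v0] :\ root z.
  apply/setP => v; rewrite !inE lt0n depth_eq0 andbC.
  case: (cV v =P v0) => [v_v0|]; last by rewrite !andbF.
  by rewrite (@root_eq v z) // v_v0 z_v0.
by rewrite (cardsD1 (root z)) inE root_cV z_v0 eqxx.
Qed.

Lemma card_descending v0 :
  #|[set f | descending f && (cV (org f) == v0)]| = #|nonroot v0|.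
Proof.
rewrite -(@card_in_imset _ _ (@org G)); last first.
  move=> f1 f2; rewrite !inE => /andP [/eqP pe1 _] /andP [/eqP pe2 _] same.
  by move: pe1; rewrite same pe2 => [[]].
apply: eq_card => v; rewrite !inE; apply/imsetP/andP => [[f]|[cVv pos]].
  by rewrite inE => /andP [/descendingP [_ pos _ _] /eqP cVf] ->; rewrite cVf eqxx pos.
have [f pe_v] := parent_edge_ex pos; have [_ _ org_f _ _] := parent_edgeP pe_v.
exists f; last by rewrite org_f.
by rewrite inE /descending org_f pe_v eqxx cVv.
Qed.

Lemma card_ascending v0 :
  #|[set f | ascending f && (cV (org f) == v0)]| = #|nonroot v0|.
Proof.
rewrite -(@card_in_imset _ _ (@ter G)); last first.
  move=> f1 f2; rewrite !inE => /andP [/eqP pe1 _] /andP [/eqP pe2 _] same.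
  by apply: rev_inj; move: pe1; rewrite same pe2 => [[]].
apply: eq_card => v; rewrite !inE; apply/imsetP/andP => [[f]|[cVv pos]].
  rewrite inE => /andP [asc /eqP cVf] ->; have [coll pos _ _] := ascendingP asc.
  by rewrite -(collapsed_cV coll) cVf eqxx pos.
have [f pe_v] := parent_edge_ex pos; have [_ coll org_f ter_f _] := parent_edgeP pe_v.
exists (rev f); last by rewrite ter_rev.
by rewrite inE /ascending ter_rev org_f pe_v revK eqxx org_rev ter_f cV_parent cVv.
Qed.

(* In the fibre over v0 both
   families are in bijection with the non-root vertices and are disjoint, so
   together they have 2(|V| - 1) elements: all the collapsed edges there, since
   the fibre is a tree (Euler characteristic 1). *)
Lemma collapsed_dir e : collapsed e -> descending e || ascending e.
Proof.
move=> coll_e; set v0 := cV (org e).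
set D := [set f | descending f && (cV (org f) == v0)].
set U := [set f | ascending f && (cV (org f) == v0)].
have DU_coll : D :|: U = [set f | (cE f == None) && (cV (org f) == v0)].
  apply/eqP; rewrite eqEcard; apply/andP; split.
    apply/subsetP => f; rewrite !inE => /orP [] /andP [dir ->]; rewrite andbT.
      by case/descendingP: dir.
    by case/ascendingP: dir.
  have DU0 : D :&: U = set0.
    apply/setP => f; rewrite !inE.
    by apply/negP => /andP [/andP [desc _] /andP [/ascending_descending]]; rewrite desc.
  case: Hc => _ [_ [_ /(_ v0) [_ _ card_coll]]].
  by rewrite cardsU DU0 cards0 subn0 card_descending card_ascending card_coll card_fibre; lia.
have : e \in [set f | (cE f == None) && (cV (org f) == v0)] by rewrite inE eqxx andbT.
by rewrite -DU_coll !inE => /orP [] /andP [-> _] //; rewrite orbT.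
Qed.

Lemma nondescending_ascending e : collapsed e -> ~~ descending e -> ascending e.
Proof. by move=> /collapsed_dir /orP [->|]. Qed.

Definition anc a z := (depth a <= depth z) && (iter (depth z - depth a) parent z == a).

Lemma depth_iter k z : depth (iter k parent z) = depth z - k.
Proof. by elim: k => [|k IHk]; rewrite ?subn0 //= depth_parent IHk subnS. Qed.

Lemma anc_refl z : anc z z.
Proof. by rewrite /anc leqnn subnn eqxx. Qed.

Lemma anc_depth a z : anc a z -> depth a <= depth z.
Proof. by case/andP. Qed.

Lemma anc_eq a z : anc a z -> depth a = depth z -> a = z.
Proof. by case/andP => _ /eqP iter_a same; rewrite same subnn in iter_a. Qed.

Lemma anc_chain a b z : anc a z -> anc b z -> depth a = depth b -> a = b.
Proof. by move=> /andP [_ /eqP iter_a] /andP [_ /eqP iter_b] same; rewrite -iter_a -iter_b same. Qed.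

Lemma anc_parent c z : anc c z -> 0 < depth c -> anc (parent c) z.
Proof.
case/andP => le /eqP iter_c pos; rewrite /anc depth_parent.
have -> : depth z - (depth c).-1 = (depth z - depth c).+1 by lia.
by rewrite iterS iter_c eqxx andbT; lia.
Qed.

Lemma anc_child a z : anc a z -> a != z ->
  exists c, [/\ parent c = a, anc c z & depth c = (depth a).+1].
Proof.
move=> anc_az neq; have lt : depth a < depth z.
  by rewrite ltn_neqAle anc_depth // andbT; apply: contra neq => /eqP /(anc_eq anc_az) ->.
case/andP: anc_az => _ /eqP iter_a; exists (iter (depth z - depth a).-1 parent z).
have dep : depth (iter (depth z - depth a).-1 parent z) = (depth a).+1.
  by rewrite depth_iter; lia.
split => //; first by rewrite -iterS prednK ?subn_gt0.
rewrite /anc dep lt; have -> : depth z - (depth a).+1 = (depth z - depth a).-1 by lia.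
by rewrite eqxx.
Qed.

Lemma anc_root z : anc (root z) z.
Proof.
have cV_iter k : cV (iter k parent z) = cV z.
  by elim: k => [|k IHk] //=; rewrite cV_parent.
have top : iter (depth z) parent z = root z.
  have /eqP := depth_iter (depth z) z; rewrite subnn depth_eq0 => /eqP ->.
  exact/root_eq/cV_iter.
by rewrite /anc depth_root subn0 leq0n top eqxx.
Qed.

(* A collapsed edge e points to y when y lies in the part of the fibre tree
   beyond e: outside the subtree of the origin of a descending edge, inside the
   subtree of the terminus of an ascending one. *)
Definition points_to e y :=
  if descending e then ~~ anc (org e) y else anc (ter e) y.

Lemma points_to_ter e : collapsed e -> points_to e (ter e).
Proof.
move=> coll; rewrite /points_to; case: ifP => [/descendingP [_ pos _ dep] | _].
  by apply/negP => /anc_depth; rewrite dep; lia.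
exact: anc_refl.
Qed.

Lemma points_to_neq e y : collapsed e -> points_to e y -> y != org e.
Proof.
move=> coll; rewrite /points_to; case: ifPn => [_ not_anc|/(nondescending_ascending coll)].
  by apply: contraNneq not_anc => ->; exact: anc_refl.
case/ascendingP => _ pos _ dep /anc_depth le.
by apply/eqP => y_org; move: le; rewrite y_org dep; lia.
Qed.

Lemma points_to_rev e y : collapsed e -> points_to e y -> ~~ points_to (rev e) y.
Proof.
move=> coll; rewrite /points_to; case: ifPn => [desc|/(nondescending_ascending coll) asc].
  have asc_r := parent_edge_ascending (eqP desc).
  by rewrite (negbTE (ascending_descending asc_r)) ter_rev.
by rewrite (parent_edge_descending (eqP asc)) org_rev negbK.
Qed.

Lemma points_to_back e b y : collapsed e -> collapsed b -> org b = ter e ->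
  b != rev e -> points_to b y -> points_to e y.
Proof.
move=> coll_e coll_b org_b b_neq; rewrite /points_to.
case: ifPn => [desc_b|/(nondescending_ascending coll_b) asc_b];
  case: ifPn => [desc_e|/(nondescending_ascending coll_e) asc_e].
- have [_ pos par _] := descendingP desc_e; rewrite org_b par.
  by apply: contra => anc_e; exact: anc_parent anc_e pos.
- by move: desc_b asc_e b_neq; rewrite /descending /ascending org_b => /eqP -> /eqP [->]; rewrite eqxx.
- (* e goes down and b goes up: their other endpoints are distinct siblings *)
  have [_ pos_b _ dep_b] := ascendingP asc_b; have [_ pos_e _ dep_e] := descendingP desc_e.
  move=> anc_b; apply/negP => anc_e.
  have deq : depth (org e) = depth (ter b) by rewrite org_b in dep_b; lia.
  move: asc_b desc_e b_neq; rewrite /ascending /descending (anc_chain anc_e anc_b deq).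
  by move=> /eqP -> /eqP [<-]; rewrite revK eqxx.
- have [_ pos par _] := ascendingP asc_b.
  by move=> /anc_parent /(_ pos); rewrite -par org_b.
Qed.

Lemma points_to_uniq e1 e2 y : collapsed e1 -> collapsed e2 -> org e1 = org e2 ->
  points_to e1 y -> points_to e2 y -> e1 = e2.
Proof.
have desc_asc d a : ascending a -> org a = org d -> anc (ter a) y -> ~~ anc (org d) y -> False.
  by move=> /ascendingP [_ pos par _] same /anc_parent /(_ pos); rewrite -par same => ->.
move=> coll1 coll2 same; rewrite /points_to.
case: ifPn => [desc1|/(nondescending_ascending coll1) asc1];
  case: ifPn => [desc2|/(nondescending_ascending coll2) asc2] p1 p2.
- by move: desc1 desc2; rewrite /descending same => /eqP -> /eqP [].
- by case: (desc_asc _ _ asc2 (esym same) p2 p1).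
- by case: (desc_asc _ _ asc1 same p1 p2).
- have [_ pos1 _ dep1] := ascendingP asc1; have [_ pos2 _ dep2] := ascendingP asc2.
  have same_ter : ter e1 = ter e2 by apply: anc_chain p1 p2 _; rewrite same in dep1; lia.
  by move: asc1 asc2; rewrite /ascending same_ter => /eqP -> /eqP [] /rev_inj.
Qed.

Lemma points_to_ex x y : cV x = cV y -> x != y ->
  exists2 e, collapsed e && (org e == x) & points_to e y.
Proof.
move=> same_fib neq; case: (boolP (anc x y)) => [anc_xy|not_anc].
  have [c [par_c anc_c dep_c]] := anc_child anc_xy neq.
  have pos_c : 0 < depth c by rewrite dep_c.
  have [f pe_c] := parent_edge_ex pos_c; have [_ coll_f org_f ter_f _] := parent_edgeP pe_c.
  exists (rev f); first by rewrite collapsed_rev coll_f org_rev ter_f par_c eqxx.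
  have asc := parent_edge_ascending pe_c.
  by rewrite /points_to (negbTE (ascending_descending asc)) ter_rev org_f.
have pos : 0 < depth x.
  rewrite lt0n depth_eq0; apply: contraNneq not_anc => x_root.
  by rewrite {1}x_root (root_eq same_fib) anc_root.
have [f pe_x] := parent_edge_ex pos; have [_ coll_f org_f _ _] := parent_edgeP pe_x.
exists f; first by rewrite coll_f org_f eqxx.
by rewrite /points_to (parent_edge_descending pe_x) org_f.
Qed.

Definition step : rel (gE G) := fun e e' => collapsed e && AG e e'.

Local Notation reach := (connect step).

Definition height := (\max_(x : gV G) depth x).+1.

Lemma depth_lt_height x : depth x < height.
Proof. by rewrite ltnS; apply: (leq_bigmax (F := depth) x). Qed.

(* A potential strictly decreasing along step: walks through a fibre first go
   down the tree along descending edges, then up along ascending ones. *)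
Definition potential e :=
  if collapsed e then
    if descending e then 2 * height + depth (org e) else 2 * height - depth (ter e)
  else 0.

Lemma potential_step e e' : step e e' -> potential e' < potential e.
Proof.
case/andP => coll_e /andP [/eqP ter_e e'_neq]; rewrite /potential coll_e.
have := depth_lt_height (ter e); have := depth_lt_height (ter e').
case: ifPn => [coll_e'|_]; last by case: ifP; lia.
case: ifPn => [desc_e'|/(nondescending_ascending coll_e') asc_e'];
  case: ifPn => [desc_e|/(nondescending_ascending coll_e) asc_e].
- by have [_ pos _ dep] := descendingP desc_e; rewrite -ter_e dep; lia.
- by move: desc_e' asc_e e'_neq; rewrite /descending /ascending -ter_e => /eqP -> /eqP [->]; rewrite eqxx.
- by have [_ pos _ _] := descendingP desc_e; lia.
- by have [_ pos _ dep] := ascendingP asc_e'; rewrite -ter_e in dep; lia.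
Qed.

Lemma reach_noncollapsed e m : ~~ collapsed e -> reach e m -> e = m.
Proof.
move=> ncoll /connectP [[|b p] //= /andP [/andP [coll _] _]].
by rewrite coll in ncoll.
Qed.

Lemma reach_cV e m : reach e m -> cV (org m) = cV (org e).
Proof.
move=> /connectP [p]; elim: p e => [|b p IHp] e /=; first by move=> _ ->.
case/andP => /andP [/collapsed_cV cV_e /andP [/eqP ter_e _]] path_b /(IHp b path_b) ->.
by rewrite -ter_e cV_e.
Qed.

Lemma reach_points_to e m : collapsed e -> ~~ collapsed m -> reach e m ->
  points_to e (org m).
Proof.
move=> coll_e ncoll_m /connectP [p]; elim: p e coll_e => [|b p IHp] e coll_e /=.
  by move=> _ m_e; rewrite m_e coll_e in ncoll_m.
case/andP => /andP [_ /andP [/eqP ter_e b_neq]] path_b m_last.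
case: (boolP (collapsed b)) => [coll_b|ncoll_b].
  exact: points_to_back coll_e coll_b (esym ter_e) b_neq (IHp b coll_b path_b m_last).
have b_m : b = m by apply: reach_noncollapsed ncoll_b _; apply/connectP; exists p.
by rewrite -b_m -ter_e; exact: points_to_ter.
Qed.

(* Conversely, everything beyond e in the fibre is reached, by induction on
   the potential: step along an edge leaving ter e that points the same way. *)
Lemma points_to_reach e m : collapsed e -> ~~ collapsed m ->
  cV (org m) = cV (org e) -> points_to e (org m) -> reach e m.
Proof.
have [n] := ubnP (potential e); elim: n e => // n IHn e pot_lt coll_e ncoll_m same p_m.
case: (eqVneq (ter e) (org m)) => [ter_m|ter_neq].
  apply: connect1; rewrite /step coll_e /AG ter_m eqxx /=.
  by apply: contraNneq ncoll_m => ->; rewrite collapsed_rev.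
have same_ter : cV (ter e) = cV (org m) by rewrite -(collapsed_cV coll_e) same.
have [b /andP [coll_b /eqP org_b] p_b] := points_to_ex same_ter ter_neq.
have step_eb : step e b.
  rewrite /step coll_e /AG org_b eqxx /=; apply: contraTneq p_b => ->.
  exact: points_to_rev coll_e p_m.
apply: connect_trans (connect1 step_eb) (IHn b _ coll_b ncoll_m _ p_b).
  by have := potential_step step_eb; lia.
by rewrite org_b -(collapsed_cV coll_e).
Qed.

Lemma reach_uniq e1 e2 m : org e1 = org e2 -> ~~ collapsed m ->
  reach e1 m -> reach e2 m -> e1 = e2.
Proof.
wlog coll1 : e1 e2 / collapsed e1.
  move=> gen same ncoll r1 r2; case: (boolP (collapsed e1)) => [c1|nc1]; first exact: gen.
  case: (boolP (collapsed e2)) => [c2|nc2]; first exact: esym (gen e2 e1 c2 (esym same) ncoll r2 r1).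
  by rewrite (reach_noncollapsed nc1 r1) (reach_noncollapsed nc2 r2).
move=> same ncoll r1 r2; have p1 := reach_points_to coll1 ncoll r1.
case: (boolP (collapsed e2)) => [coll2|ncoll2].
  exact: points_to_uniq coll1 coll2 same p1 (reach_points_to coll2 ncoll r2).
have e2_m := reach_noncollapsed ncoll2 r2.
by move: (points_to_neq coll1 p1); rewrite -e2_m -same eqxx.
Qed.

Lemma reach_first_step e m : collapsed e -> ~~ collapsed m ->
  reach e m = [exists b, AG e b && reach b m].
Proof.
move=> coll ncoll; apply/idP/existsP => [|[b /andP [eb bm]]].
  case/connectP => [[|b p] /= path_p m_last]; first by rewrite m_last coll in ncoll.
  case/andP: path_p => /andP [_ eb] path_b; exists b; rewrite eb /=.
  by apply/connectP; exists p.
by apply: connect_trans bm; apply: connect1; rewrite /step coll.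
Qed.

Lemma lift_transition e0 e0' :
  [exists b, AG (lift e0) b && reach b (lift e0')] = AG e0 e0'.
Proof.
have [_ ter_n rev_n] := cE_some (liftP e0); have [org_m _ _] := cE_some (liftP e0').
have m_rev : (lift e0' == rev (lift e0)) = (e0' == rev e0).
  apply/eqP/eqP => [m_rev|->]; last exact: esym (lift_uniq rev_n).
  by move: (liftP e0'); rewrite m_rev rev_n => [[]].
have ncoll_m := lift_noncollapsed e0'.
set n := lift e0 in ter_n rev_n m_rev *; set m := lift e0' in org_m m_rev ncoll_m *.
rewrite /AG; apply/existsP/andP => [[b /andP [/andP [/eqP ter_b b_neq] r_bm]] | [/eqP ter_org neq]].
  split; first by rewrite -org_m (reach_cV r_bm) -ter_b ter_n.
  rewrite -m_rev; apply: contraNneq b_neq => m_eq.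
  case: (boolP (collapsed b)) => [coll_b|ncoll_b]; last by rewrite (reach_noncollapsed ncoll_b r_bm) m_eq eqxx.
  by move: (points_to_neq coll_b (reach_points_to coll_b ncoll_m r_bm)); rewrite m_eq org_rev ter_b eqxx.
case: (eqVneq (ter n) (org m)) => [ter_eq|ter_neq].
  by exists m; rewrite ter_eq eqxx m_rev neq connect0.
have same : cV (ter n) = cV (org m) by rewrite ter_n org_m ter_org.
have [b /andP [coll_b /eqP org_b] p_b] := points_to_ex same ter_neq.
exists b; rewrite org_b eqxx /=; apply/andP; split.
  by apply: contraTneq coll_b => ->; rewrite /collapsed rev_n.
by apply: points_to_reach coll_b ncoll_m _ p_b; rewrite org_b same.
Qed.

Local Open Scope ring_scope.
Variable R : realType.

Definition Bmx : 'M[R]_#|gE G| := \matrix_(i, j) (step (enum_val i) (enum_val j))%:R.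

Definition Pmx : 'M[R]_(#|gE G|, #|gE G0|) :=
  \matrix_(i, k) (enum_val i == lift (enum_val k))%:R.

Definition Qmx (l : gE G0 -> R) : 'M[R]_(#|gE G0|, #|gE G|) :=
  \matrix_(k, j) ((AG (lift (enum_val k)) (enum_val j))%:R * expR (- l (enum_val k))).

Definition Ymx : 'M[R]_(#|gE G|, #|gE G0|) :=
  \matrix_(j, k) (reach (enum_val j) (lift (enum_val k)))%:R.

(* Rows of collapsed edges carry weight exp 0 = 1 and form B; the row of the
   lift of e0 carries weight exp(-l e0) and is the row e0 of Q. *)
Lemma AGf_pullback l : AGf (pullback cE l) = Bmx + Pmx *m Qmx l.
Proof.
apply/matrixP => i j; rewrite !mxE /pullback /step /collapsed.
case cE_i: (cE (enum_val i)) => [e0|] /=.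
  have i_lift : enum_val i = lift e0 := lift_uniq cE_i.
  rewrite add0r (bigD1 (enum_rank e0)) //= big1 ?addr0 => [|k k_neq].
    by rewrite !mxE enum_rankK i_lift eqxx mul1r.
  rewrite !mxE i_lift; case: eqP => [lift_eq|_]; last by rewrite mul0r.
  have [e0_k] : Some e0 = Some (enum_val k) by rewrite -liftP lift_eq liftP.
  by rewrite e0_k enum_valK eqxx in k_neq.
rewrite big1 ?addr0 => [|k _]; first by rewrite oppr0 expR0 mulr1.
rewrite !mxE; case: eqP => [i_lift|]; last by rewrite mul0r.
by move: cE_i; rewrite i_lift liftP.
Qed.

(* B strictly decreases the potential, hence det(1 - B) = 1. *)
Lemma det_Bmx : \det (1%:M - Bmx) = 1.
Proof.
apply: (det_1sub_graded (phi := fun i => potential (enum_val i))) => i j.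
rewrite mxE; case: (boolP (step _ _)) => [st _|_]; first exact: potential_step.
by rewrite eqxx.
Qed.

(* First-step decomposition of walks: (1 - B) Y = P. *)
Lemma BY : (1%:M - Bmx) *m Ymx = Pmx.
Proof.
apply/matrixP => j k; rewrite mulmxBl mul1mx !mxE.
set m := lift (enum_val k); have ncoll_m : ~~ collapsed m := lift_noncollapsed _.
case: (boolP (collapsed (enum_val j))) => [coll_j|ncoll_j].
  have -> : (enum_val j == m) = false by apply: contraNF ncoll_m => /eqP <-.
  rewrite (eq_bigr (fun b => (AG (enum_val j) (enum_val b) && reach (enum_val b) m)%:R)).
    rewrite (reach_first_step coll_j ncoll_m).
    rewrite (@sum_enum_uniq _ _ (fun b => AG (enum_val j) b && reach b m)) ?subrr // => b1 b2.
    move=> /andP [/andP [/eqP ter1 _] r1] /andP [/andP [/eqP ter2 _] r2].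
    by apply: reach_uniq ncoll_m r1 r2; rewrite -ter1 -ter2.
  by move=> b _; rewrite !mxE /step coll_j /= -natrM mulnb.
rewrite big1 ?subr0 => [|b _]; last by rewrite !mxE /step (negbTE ncoll_j) mul0r.
congr (nat_of_bool _)%:R; apply/idP/eqP => [|->]; last exact: connect0.
exact: reach_noncollapsed ncoll_j.
Qed.

Lemma QY l : Qmx l *m Ymx = AGf l.
Proof.
apply/matrixP => k k'; rewrite !mxE.
set n := lift (enum_val k); set m := lift (enum_val k').
rewrite (eq_bigr (fun j => expR (- l (enum_val k)) *
    (AG n (enum_val j) && reach (enum_val j) m)%:R)); last first.
  by move=> j _; rewrite !mxE mulrAC mulrC -natrM mulnb.
rewrite -mulr_sumr (@sum_enum_uniq _ _ (fun b => AG n b && reach b m)) => [|b1 b2].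
  by rewrite lift_transition mulrC.
move=> /andP [/andP [/eqP ter1 _] r1] /andP [/andP [/eqP ter2 _] r2].
by apply: reach_uniq (lift_noncollapsed _) r1 r2; rewrite -ter1 -ter2.
Qed.

(* 1 - A_{G,c^* l} = (1 - B)(1 - Y Q), and Sylvester's identity turns
   det(1 - Y Q) into det(1 - Q Y) = F_{G0}(l). *)
Lemma FG_pullback (l : gE G0 -> R) : FG (pullback cE l) = FG l.
Proof.
rewrite /FG AGf_pullback.
have -> : 1%:M - (Bmx + Pmx *m Qmx l) = (1%:M - Bmx) *m (1%:M - Ymx *m Qmx l).
  by rewrite mulmxBr mulmx1 mulmxA BY opprD addrA.
by rewrite det_mulmx det_Bmx mul1r det_1subMC QY.
Qed.

End CollapseFibres.

Theorem mainTheorem9 (R : realType) (G G0 : graph)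
    (cV : gV G -> gV G0) (cE : gE G -> option (gE G0)) :
  connected_graph G -> connected_graph G0 ->
  is_collapse cV cE ->
  forall l : gE G0 -> R, length_fun l ->
    FG (pullback cE l) = FG l.
Proof. move=> _ _ collapse l _; exact: (FG_pullback collapse l). Qed.
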